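(* For no $\alpha\in\mathbb R$ is a right circular cylinder in $\mathbb R^3$ (of any radius, any axis) an $\alpha$-stationary surface.
   Context: Let $\Sigma$ be a connected oriented surface immersed in $\mathbb R^3\setminus\{0\}$ with unit normal $\nu$ and mean curvature $H$ (sum of the principal curvatures). For $\alpha\in\mathbb R$, $\Sigma$ is called $\alpha$-stationary if $H(p)=\alpha\,\frac{\langle\nu(p),p\rangle}{|p|^2}$ for all $p\in\Sigma$. *)

From Stdlib Require Import Reals.
From Coquelicot Require Import Coquelicot.
Open Scope R_scope.

Definition R3 : Type := (R * R * R)%type.
Definition vx (p : R3) : R := fst (fst p).
Definition vy (p : R3) : R := snd (fst p).
Definition vz (p : R3) : R := snd p.
Definition mk3 (a b c : R) : R3 := (a, b, c).
Definition vadd (p q : R3) : R3 := mk3 (vx p + vx q) (vy p + vy q) (vz p + vz q).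
Definition vscal (k : R) (p : R3) : R3 := mk3 (k * vx p) (k * vy p) (k * vz p).
Definition dot (p q : R3) : R := vx p * vx q + vy p * vy q + vz p * vz q.
Definition norm2 (p : R3) : R := dot p p.
Definition origin : R3 := mk3 0 0 0.

Definition pd1 (X : R -> R -> R3) (a b : R) : R3 :=
  mk3 (Derive (fun s => vx (X s b)) a)
      (Derive (fun s => vy (X s b)) a)
      (Derive (fun s => vz (X s b)) a).
Definition pd2 (X : R -> R -> R3) (a b : R) : R3 :=
  mk3 (Derive (fun s => vx (X a s)) b)
      (Derive (fun s => vy (X a s)) b)
      (Derive (fun s => vz (X a s)) b).

Definition unit_normal_field (X : R -> R -> R3) (N : R -> R -> R3) : Prop :=
  (forall a b, norm2 (N a b) = 1 /\ dot (N a b) (pd1 X a b) = 0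
                                 /\ dot (N a b) (pd2 X a b) = 0)
  /\ (forall a b, continuous (fun p : R * R => N (fst p) (snd p)) (a, b)).

(* Mean curvature (sum of principal curvatures) w.r.t. N, via the first
   fundamental form (E,F,G) and second fundamental form (L,M,Nn) with
   L = <X_aa, N> etc.:  H = (E Nn - 2 F M + G L) / (E G - F^2). *)
Definition mean_curv (X N : R -> R -> R3) (a b : R) : R :=
  let Xa := pd1 X a b in
  let Xb := pd2 X a b in
  let E := dot Xa Xa in
  let F := dot Xa Xb in
  let G := dot Xb Xb in
  let L := dot (pd1 (pd1 X) a b) (N a b) in
  let M := dot (pd2 (pd1 X) a b) (N a b) in
  let Nn := dot (pd2 (pd2 X) a b) (N a b) in
  (E * Nn - 2 * F * M + G * L) / (E * G - F * F).

Definition alpha_stationary (X N : R -> R -> R3) (alpha : R) : Prop :=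
  forall a b, X a b <> origin ->
    mean_curv X N a b = alpha * dot (N a b) (X a b) / norm2 (X a b).

Definition orthonormal (u v e : R3) : Prop :=
  norm2 u = 1 /\ norm2 v = 1 /\ norm2 e = 1 /\
  dot u v = 0 /\ dot u e = 0 /\ dot v e = 0.

Definition cylinder (c u v e : R3) (r : R) : R -> R -> R3 :=
  fun th t => vadd c (vadd (vscal (r * cos th) u)
                          (vadd (vscal (r * sin th) v) (vscal t e))).

From Stdlib Require Import Reals Lra FunctionalExtensionality.
From Coquelicot Require Import Coquelicot.
Open Scope R_scope.

(* Along the generator [th = 0] the unit normal is [±u] and the mean curvature
   is [∓1/r], while [<nu, p> = ±<u, c + r u>] is constant.  Stationarity then
   forces [|p|^2] to be constant along this line, which is impossible because
   [|p|^2] is a nonconstant quadratic in the line parameter. *)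

Ltac vec_ring :=
  repeat match goal with p : R3 |- _ => destruct p as [[? ?] ?] end;
  unfold norm2, dot, vadd, vscal, origin, mk3, vx, vy, vz; simpl;
  lazymatch goal with
  | |- (_, _) = (_, _) => f_equal; [f_equal|]; ring
  | _ => ring
  end.

Lemma dot_sym p q : dot p q = dot q p.
Proof. vec_ring. Qed.

Lemma dot_add_r p q s : dot s (vadd p q) = dot s p + dot s q.
Proof. vec_ring. Qed.

Lemma dot_scal_l k p q : dot (vscal k p) q = k * dot p q.
Proof. vec_ring. Qed.

Lemma dot_scal_r k p q : dot p (vscal k q) = k * dot p q.
Proof. vec_ring. Qed.

Lemma dot_origin_l p : dot origin p = 0.
Proof. vec_ring. Qed.

Lemma dot_origin_r p : dot p origin = 0.
Proof. vec_ring. Qed.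

Lemma norm2_ge0 p : 0 <= norm2 p.
Proof. destruct p as [[x y] z]; unfold norm2, dot, vx, vy, vz; simpl; nra. Qed.

Lemma norm2_origin : norm2 origin = 0.
Proof. vec_ring. Qed.

Lemma norm2_neq0 p : p <> origin -> norm2 p <> 0.
Proof.
  intros Hp H0; apply Hp.
  destruct p as [[x y] z]; unfold norm2, dot, origin, mk3, vx, vy, vz in *; simpl in *.
  assert (Hx : x * x = 0) by nra; assert (Hy : y * y = 0) by nra; assert (Hz : z * z = 0) by nra.
  apply Rmult_integral in Hx, Hy, Hz.
  f_equal; [f_equal|]; [destruct Hx | destruct Hy | destruct Hz]; assumption.
Qed.

Lemma norm2_add_scal p e t :
  norm2 (vadd p (vscal t e)) = norm2 p + 2 * t * dot p e + t * t * norm2 e.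
Proof. vec_ring. Qed.

Lemma vscal_inj k p q : k <> 0 -> vscal k p = vscal k q -> p = q.
Proof.
  intros Hk Hpq.
  destruct p as [[p1 p2] p3], q as [[q1 q2] q3].
  unfold vscal, mk3, vx, vy, vz in Hpq; simpl in Hpq.
  injection Hpq; intros H3 H2 H1.
  f_equal; [f_equal|]; apply (Rmult_eq_reg_l k); assumption.
Qed.

Definition cross (p q : R3) : R3 :=
  mk3 (vy p * vz q - vz p * vy q) (vz p * vx q - vx p * vz q)
      (vx p * vy q - vy p * vx q).

Lemma triple_product_expansion u v e x :
  vscal (dot u (cross v e)) x =
  vadd (vscal (dot x u) (cross v e))
       (vadd (vscal (dot x v) (cross e u)) (vscal (dot x e) (cross u v))).
Proof. unfold cross; vec_ring. Qed.

Lemma triple_product_gram u v e :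
  dot u (cross v e) * dot u (cross v e) =
  norm2 u * (norm2 v * norm2 e - dot v e * dot v e)
  - dot u v * (dot u v * norm2 e - dot v e * dot u e)
  + dot u e * (dot u v * dot v e - norm2 v * dot u e).
Proof. unfold cross; vec_ring. Qed.

Lemma orthonormal_triple_product_neq0 u v e :
  orthonormal u v e -> dot u (cross v e) <> 0.
Proof.
  intros (Hu & Hv & He & Huv & Hue & Hve) H0.
  pose proof (triple_product_gram u v e) as Hgram.
  rewrite H0, Hu, Hv, He, Huv, Hue, Hve in Hgram.
  lra.
Qed.

Lemma frame_coords_inj u v e x y :
  dot u (cross v e) <> 0 ->
  dot x u = dot y u -> dot x v = dot y v -> dot x e = dot y e -> x = y.
Proof.
  intros HD Hu Hv He.
  apply (vscal_inj _ _ _ HD).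
  rewrite !triple_product_expansion, Hu, Hv, He.
  reflexivity.
Qed.

Lemma orthonormal_unit_orthogonal u v e n :
  orthonormal u v e -> norm2 n = 1 -> dot n v = 0 -> dot n e = 0 ->
  n = vscal (dot n u) u /\ dot n u * dot n u = 1.
Proof.
  intros Ho Hn Hnv Hne.
  pose proof Ho as (Hu & _ & _ & Huv & Hue & _).
  set (a := dot n u).
  assert (Hna : n = vscal a u).
  { apply (frame_coords_inj u v e); [now apply orthonormal_triple_product_neq0| | |];
      rewrite dot_scal_l.
    - unfold norm2 in Hu; rewrite Hu; unfold a; ring.
    - rewrite Huv, Hnv; ring.
    - rewrite Hue, Hne; ring. }
  split; [exact Hna|].
  rewrite <- Hn, Hna; unfold norm2.
  rewrite dot_scal_l, dot_scal_r.
  fold (norm2 u); rewrite Hu; ring.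
Qed.

Lemma norm2_line_not_const p e K :
  norm2 e = 1 ->
  ~ (forall t, vadd p (vscal t e) <> origin -> norm2 (vadd p (vscal t e)) = K).
Proof.
  intros He Hconst.
  set (B := dot p e).
  assert (Hline : forall t, norm2 (vadd p (vscal t e)) = norm2 p - B * B + (t + B) * (t + B)).
  { intro t; rewrite norm2_add_scal, He; unfold B; ring. }
  assert (Hdist : 0 <= norm2 p - B * B).
  { pose proof (norm2_ge0 (vadd p (vscal (- B) e))) as H.
    rewrite Hline in H; lra. }
  assert (Hvalue : forall t, 0 < t + B -> norm2 p - B * B + (t + B) * (t + B) = K).
  { intros t Ht; rewrite <- Hline; apply Hconst.
    intro H0; pose proof (Hline t) as Hl; rewrite H0, norm2_origin in Hl; nra. }
  pose proof (Hvalue (1 - B)) as H1; pose proof (Hvalue (2 - B)) as H2.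
  lra.
Qed.

Definition frame_point (p u v e : R3) (x y z : R) : R3 :=
  vadd p (vadd (vscal x u) (vadd (vscal y v) (vscal z e))).

Lemma dot_frame_point_l p u v e x y z n :
  dot (frame_point p u v e x y z) n = dot p n + (x * dot u n + (y * dot v n + z * dot e n)).
Proof. unfold frame_point; vec_ring. Qed.

Lemma dot_frame_point_r p u v e x y z n :
  dot n (frame_point p u v e x y z) = dot n p + (x * dot n u + (y * dot n v + z * dot n e)).
Proof. unfold frame_point; vec_ring. Qed.

Lemma dot_frame_point u v e x y z x' y' z' :
  orthonormal u v e ->
  dot (frame_point origin u v e x y z) (frame_point origin u v e x' y' z') =
  x * x' + y * y' + z * z'.
Proof.
  intros (Hu & Hv & He & Huv & Hue & Hve).
  unfold norm2 in Hu, Hv, He.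
  rewrite dot_frame_point_l, !dot_frame_point_r, !dot_origin_l, !dot_origin_r.
  rewrite (dot_sym v u), (dot_sym e u), (dot_sym e v), Hu, Hv, He, Huv, Hue, Hve.
  ring.
Qed.

Lemma is_derive_frame_coord (p a b d : R) (x y z : R -> R) (s x' y' z' : R) :
  is_derive x s x' -> is_derive y s y' -> is_derive z s z' ->
  is_derive (fun s => p + (x s * a + (y s * b + z s * d))) s
            (0 + (x' * a + (y' * b + z' * d))).
Proof.
  intros Hx Hy Hz.
  auto_derive.
  - repeat split; eexists; eassumption.
  - replace (Derive (fun t : R => x t) s) with x' by (symmetry; now apply is_derive_unique).
    replace (Derive (fun t : R => y t) s) with y' by (symmetry; now apply is_derive_unique).
    replace (Derive (fun t : R => z t) s) with z' by (symmetry; now apply is_derive_unique).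
    ring.
Qed.

Lemma pd1_frame_point p u v e (x y z x' y' z' : R -> R -> R) :
  (forall a b, is_derive (fun s => x s b) a (x' a b)) ->
  (forall a b, is_derive (fun s => y s b) a (y' a b)) ->
  (forall a b, is_derive (fun s => z s b) a (z' a b)) ->
  pd1 (fun a b => frame_point p u v e (x a b) (y a b) (z a b)) =
  fun a b => frame_point origin u v e (x' a b) (y' a b) (z' a b).
Proof.
  intros Hx Hy Hz.
  apply functional_extensionality; intro a; apply functional_extensionality; intro b.
  destruct p as [[? ?] ?], u as [[? ?] ?], v as [[? ?] ?], e as [[? ?] ?].
  unfold pd1, frame_point, vadd, vscal, origin, mk3, vx, vy, vz; simpl.
  f_equal; [f_equal|]; apply is_derive_unique, is_derive_frame_coord; auto.
Qed.

Lemma pd2_frame_point p u v e (x y z x' y' z' : R -> R -> R) :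
  (forall a b, is_derive (fun s => x a s) b (x' a b)) ->
  (forall a b, is_derive (fun s => y a s) b (y' a b)) ->
  (forall a b, is_derive (fun s => z a s) b (z' a b)) ->
  pd2 (fun a b => frame_point p u v e (x a b) (y a b) (z a b)) =
  fun a b => frame_point origin u v e (x' a b) (y' a b) (z' a b).
Proof.
  intros Hx Hy Hz.
  apply functional_extensionality; intro a; apply functional_extensionality; intro b.
  destruct p as [[? ?] ?], u as [[? ?] ?], v as [[? ?] ?], e as [[? ?] ?].
  unfold pd2, frame_point, vadd, vscal, origin, mk3, vx, vy, vz; simpl.
  f_equal; [f_equal|]; apply is_derive_unique, is_derive_frame_coord; auto.
Qed.

Lemma cylinder_0 c u v e r t :
  cylinder c u v e r 0 t = vadd (vadd c (vscal r u)) (vscal t e).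
Proof. unfold cylinder; rewrite cos_0, sin_0; vec_ring. Qed.

Section Cylinder.

Variables (c u v e : R3) (r : R).

Let X := cylinder c u v e r.

Lemma pd1_cylinder :
  pd1 X = fun a _ => frame_point origin u v e (- (r * sin a)) (r * cos a) 0.
Proof.
  apply (pd1_frame_point c u v e (fun a _ => r * cos a) (fun a _ => r * sin a) (fun _ b => b));
    intros; auto_derive; auto; ring.
Qed.

Lemma pd2_cylinder : pd2 X = fun _ _ => frame_point origin u v e 0 0 1.
Proof.
  apply (pd2_frame_point c u v e (fun a _ => r * cos a) (fun a _ => r * sin a) (fun _ b => b));
    intros; auto_derive; auto; ring.
Qed.

Lemma pd11_cylinder :
  pd1 (pd1 X) = fun a _ => frame_point origin u v e (- (r * cos a)) (- (r * sin a)) 0.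
Proof.
  rewrite pd1_cylinder.
  apply (pd1_frame_point origin u v e (fun a _ => - (r * sin a)) (fun a _ => r * cos a)
           (fun _ _ => 0)); intros; auto_derive; auto; ring.
Qed.

Lemma pd21_cylinder : pd2 (pd1 X) = fun _ _ => frame_point origin u v e 0 0 0.
Proof.
  rewrite pd1_cylinder.
  apply (pd2_frame_point origin u v e (fun a _ => - (r * sin a)) (fun a _ => r * cos a)
           (fun _ _ => 0)); intros; auto_derive; auto; ring.
Qed.

Lemma pd22_cylinder : pd2 (pd2 X) = fun _ _ => frame_point origin u v e 0 0 0.
Proof.
  rewrite pd2_cylinder.
  apply (pd2_frame_point origin u v e (fun _ _ => 0) (fun _ _ => 0) (fun _ _ => 1));
    intros; auto_derive; auto; ring.
Qed.

Hypothesis frame_orthonormal : orthonormal u v e.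
Hypothesis radius_neq0 : r <> 0.

Lemma mean_curv_cylinder N a b :
  mean_curv X N a b = - dot (frame_point origin u v e (cos a) (sin a) 0) (N a b) / r.
Proof.
  unfold mean_curv.
  rewrite pd11_cylinder, pd21_cylinder, pd22_cylinder, pd1_cylinder, pd2_cylinder.
  rewrite !dot_frame_point by assumption.
  rewrite !dot_frame_point_l, !dot_origin_l.
  assert (Hsc : sin a * sin a + cos a * cos a = 1) by (rewrite <- (sin2_cos2 a); reflexivity).
  match goal with
  | |- _ / ?E = _ => replace E with (r * r * (sin a * sin a + cos a * cos a)) by ring
  end.
  rewrite Hsc.
  field; exact radius_neq0.
Qed.

Lemma cylinder_normal_0 N t :
  unit_normal_field X N ->
  N 0 t = vscal (dot (N 0 t) u) u /\ dot (N 0 t) u * dot (N 0 t) u = 1.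
Proof.
  intros [HN _].
  destruct (HN 0 t) as (Hunit & Hperp1 & Hperp2).
  rewrite pd1_cylinder, dot_frame_point_r, dot_origin_r, sin_0, cos_0 in Hperp1.
  rewrite pd2_cylinder, dot_frame_point_r, dot_origin_r in Hperp2.
  apply (orthonormal_unit_orthogonal u v e); [exact frame_orthonormal|exact Hunit| |lra].
  assert (Hrv : r * dot (N 0 t) v = 0) by lra.
  destruct (Rmult_integral _ _ Hrv) as [H0|H0]; [contradiction|exact H0].
Qed.

Lemma cylinder_stationary_norm2_0 N alpha :
  unit_normal_field X N -> alpha_stationary X N alpha ->
  forall t, X 0 t <> origin -> norm2 (X 0 t) = - (alpha * r * (dot u c + r)).
Proof.
  intros HN Hst t Hne.
  pose proof frame_orthonormal as (Hu & _ & _ & Huv & Hue & _).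
  destruct (cylinder_normal_0 N t HN) as [Hnu Ha].
  set (a := dot (N 0 t) u) in *.
  set (K := dot u c + r).
  assert (HQ : norm2 (X 0 t) <> 0) by (apply norm2_neq0; exact Hne).
  specialize (Hst 0 t Hne).
  rewrite mean_curv_cylinder, cos_0, sin_0, Hnu in Hst.
  set (Q := norm2 (X 0 t)) in *.
  assert (Hcurv : dot (frame_point origin u v e 1 0 0) (vscal a u) = a).
  { rewrite dot_frame_point_l, dot_origin_l, !dot_scal_r, (dot_sym v u), (dot_sym e u).
    unfold norm2 in Hu; rewrite Hu, Huv, Hue; ring. }
  assert (Hsupp : dot (vscal a u) (X 0 t) = a * K).
  { unfold X; rewrite cylinder_0, dot_scal_l, !dot_add_r, !dot_scal_r.
    unfold norm2 in Hu; unfold K; rewrite Hu, Hue; ring. }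
  rewrite Hcurv, Hsupp in Hst.
  assert (Hcleared : - a * Q = alpha * (a * K) * r).
  { transitivity (- a / r * (r * Q)); [field; exact radius_neq0|].
    rewrite Hst; field; exact HQ. }
  transitivity (a * a * Q); [rewrite Ha; ring|].
  transitivity (- a * (- a * Q)); [ring|].
  rewrite Hcleared.
  transitivity (- (a * a) * (alpha * r * K)); [ring|].
  rewrite Ha; ring.
Qed.

End Cylinder.

Theorem mainTheorem4 :
  forall (alpha r : R) (c u v e : R3) (N : R -> R -> R3),
    0 < r -> orthonormal u v e ->
    unit_normal_field (cylinder c u v e r) N ->
    ~ alpha_stationary (cylinder c u v e r) N alpha.
Proof.
  intros alpha r c u v e N Hr Ho HN Hst.
  assert (Hr0 : r <> 0) by lra.
  apply (norm2_line_not_const (vadd c (vscal r u)) e (- (alpha * r * (dot u c + r)))).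
  - destruct Ho as (_ & _ & He & _); exact He.
  - intro t; rewrite <- (cylinder_0 c u v e r t).
    exact (cylinder_stationary_norm2_0 c u v e r Ho Hr0 N alpha HN Hst t).
Qed.
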